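(* Let $G$ be a cyclic group of order $n\ge 4$. Then $\{2,n-2,n-1\}\in\mathcal L(G)$.
   Context: For a finite abelian group $G$, a sequence over $G$ is an element of the free abelian monoid $\mathcal F(G)$ with basis $G$ (a finite unordered list of elements of $G$, repetitions allowed). $\mathcal B(G)$ is the monoid of zero-sum sequences over $G$ (including the empty sequence). An atom is a minimal zero-sum sequence, i.e. a nonempty zero-sum sequence that is not a product of two nonempty zero-sum sequences. For $B\in\mathcal B(G)$, $\mathsf L(B)=\{k\in\mathbb N_0: B \text{ is a product of } k \text{ atoms}\}$, and $\mathcal L(G)=\{\mathsf L(B):B\in\mathcal B(G)\}$. *)

From mathcomp Require Import all_boot all_order all_algebra.
Set Implicit Arguments. Unset Strict Implicit. Unset Printing Implicit Defensive.
Import GRing.Theory.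
Local Open Scope ring_scope.

(* Sequences over an (additive) abelian group T are finite unordered lists:
   we represent them by [seq T] and identify sequences up to permutation
   ([perm_eq]); the monoid product of sequences is concatenation. *)

Definition zero_sum (T : zmodType) (S : seq T) : Prop := \sum_(x <- S) x = 0.

Definition atom (T : zmodType) (A : seq T) : Prop :=
  A <> [::] /\ zero_sum A /\
  ~ (exists S1 S2 : seq T, S1 <> [::] /\ S2 <> [::] /\ zero_sum S1 /\
       zero_sum S2 /\ perm_eq A (S1 ++ S2)).

Definition in_lengths (T : zmodType) (B : seq T) (k : nat) : Prop :=
  exists F : seq (seq T),
    size F = k /\ (forall A, A \in F -> atom A) /\ perm_eq B (flatten F).

Definition in_system_of_sets (T : zmodType) (X : nat -> Prop) : Prop :=
  exists B : seq T, zero_sum B /\ forall k, in_lengths B k <-> X k.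

(* We write n = m + 4 and take B = U (-U), where U = 2 1^(n-2) is an atom.
   - B has factorizations of lengths 2, n-2 and n-1, namely
       U (-U),   (2,-1,-1) (-2,1,1) (1,-1)^(n-4),   (2,-2) (1,-1)^(n-2).
   - Conversely, record for each atom A dividing B its profile
     (#1's, #(-1)'s, #(+-2)'s).  Either A = (1,-1), or A contains units of only
     one sign and at least one of +-2; if it contains exactly one of them, say v,
     then v + k e = 0 with e = +-1 and k < n units, which forces k = n-2 or 2.
     A purely arithmetic count of such profiles with totals (n-2, n-2, 2)
     shows that every factorization has length 2, n-2 or n-1.
   The file first proves general facts on atoms over any abelian group, then
   the arithmetic of profiles, then the facts about Z/nZ and the two inclusions;
   the theorem comes last. *)

From mathcomp Require Import all_boot all_order all_algebra.
From mathcomp Require Import zify.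
Set Implicit Arguments. Unset Strict Implicit. Unset Printing Implicit Defensive.
Import GRing.Theory.
Local Open Scope ring_scope.

Section Atoms.
Variable T : zmodType.
Implicit Types (A S : seq T) (c x : T).

Lemma sum_nseq k c : \sum_(x <- nseq k c) x = c *+ k.
Proof. by elim: k => [|k IH]; rewrite ?big_nil //= big_cons IH mulrS. Qed.

Lemma constant_seq c S : {in S, forall x, x = c} -> S = nseq (size S) c.
Proof. by move=> Sc; apply/all_pred1P/allP => x /Sc ->; rewrite /= eqxx. Qed.

Lemma zero_sum_cat S1 S2 : zero_sum S1 -> zero_sum S2 -> zero_sum (S1 ++ S2).
Proof. by rewrite /zero_sum big_cat /= => -> ->; rewrite addr0. Qed.

(* If an atom is rearranged as S1 ++ S2 with S1 zero-sum, then S1 or S2 is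
   empty: the complement of a zero-sum subsequence is again zero-sum. *)
Lemma atom_split A S1 S2 :
  atom A -> perm_eq A (S1 ++ S2) -> zero_sum S1 -> S1 = [::] \/ S2 = [::].
Proof.
move=> [_ [zA not_split]] AS z1.
case: S1 AS z1 => [|x1 S1] AS z1; first by left.
case: S2 AS => [|x2 S2] AS; first by right.
exfalso; apply: not_split; exists (x1 :: S1), (x2 :: S2); do 4!split => //.
by move: zA; rewrite /zero_sum (perm_big _ AS) big_cat /= z1 add0r.
Qed.

(* Negation is an automorphism of B(T), so it maps atoms to atoms. *)
Lemma atom_opp A : atom A -> atom (map -%R A).
Proof.
move=> aA; have [A_ne [zA _]] := aA.
have zero_sum_opp S : zero_sum S -> zero_sum (map -%R S).
  by rewrite /zero_sum big_map sumrN => ->; rewrite oppr0.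
split; first by case: A A_ne {aA zA}.
split; first exact: zero_sum_opp.
move=> [S1 [S2 [n1 [n2 [z1 [z2 AS]]]]]].
have AS' : perm_eq A (map -%R S1 ++ map -%R S2).
  by rewrite -map_cat -[A](mapK opprK); apply: perm_map.
case: (atom_split aA AS' (zero_sum_opp _ z1)) => /(congr1 size); rewrite size_map.
  by case: S1 n1 {z1 AS AS'}.
by case: S2 n2 {z2 AS AS'}.
Qed.

(* A nonempty zero-sum sequence of at most three nonzero terms is an atom:
   a proper zero-sum factor would be a single term, hence zero. *)
Lemma atom_short A :
  A <> [::] -> {in A, forall x, x != 0} -> (size A <= 3)%N -> zero_sum A ->
  atom A.
Proof.
move=> A_ne nzA szA zA; do 2!split => //.
move=> [S1 [S2 [n1 [n2 [z1 [z2 AS]]]]]].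
have no_singleton S : zero_sum S -> {subset S <= A} -> size S <> 1%N.
  case: S => [|x [|]] //= zS SA _.
  move: zS; rewrite /zero_sum big_seq1 => x0.
  by move: (nzA x (SA x (mem_head _ _))); rewrite x0 eqxx.
have szS := perm_size AS; rewrite size_cat in szS.
have /no_singleton S1_ge2 : {subset S1 <= A}.
  by move=> x xS; rewrite (perm_mem AS) mem_cat xS.
have /no_singleton S2_ge2 : {subset S2 <= A}.
  by move=> x xS; rewrite (perm_mem AS) mem_cat xS orbT.
move: (S1_ge2 z1) (S2_ge2 z2) n1 n2; case: S1 {AS z1 S1_ge2} szS => [|? [|? ?]];
  case: S2 {z2 S2_ge2} => [|? [|? ?]] //=; lia.
Qed.

Definition pair_atom c : seq T := [:: c; - c].
Definition triple_atom c : seq T := [:: c *+ 2; - c; - c].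

Lemma atom_pair c : c != 0 -> atom (pair_atom c).
Proof.
move=> c0; apply: atom_short => //.
  by move=> x; rewrite !inE => /orP [] /eqP ->; rewrite ?oppr_eq0.
by rewrite /zero_sum !big_cons big_nil addr0 subrr.
Qed.

Lemma atom_triple c : c != 0 -> c *+ 2 != 0 -> atom (triple_atom c).
Proof.
move=> c0 c20; apply: atom_short => //.
  by move=> x; rewrite !inE => /or3P [] /eqP ->; rewrite ?oppr_eq0.
by rewrite /zero_sum !big_cons big_nil addr0 mulr2n -opprD subrr.
Qed.

End Atoms.

Section Profiles.
Local Open Scope nat_scope.

(* Possible numbers (a, b) of 1's and -1's in an atom dividing B that contains
   exactly one of +-2; here N stands for n-2. *)
Definition one_two_profile (N a b : nat) : Prop :=
  (a = N /\ b = 0) \/ (a = 2 /\ b = 0) \/ (a = 0 /\ b = N) \/ (a = 0 /\ b = 2).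

(* Possible profiles (a, b, s) = (#1's, #(-1)'s, #(+-2)'s) of an atom dividing
   B: the pair (1,-1), or an atom with units of one sign only and s > 0. *)
Definition atom_profile (N : nat) (t : nat * nat * nat) : Prop :=
  let: (a, b, s) := t in
  (a = 1 /\ b = 1 /\ s = 0) \/
  0 < s /\ (a = 0 \/ b = 0) /\ (s = 1 -> one_two_profile N a b).

(* Counting: a list of profiles with totals (N, N, 2) has length 2, N or N+1.
   Pairs contribute (1,1,0); at most two profiles have s > 0, and the totals
   leave only a few combinations for them. *)
Lemma size_of_profiles N (L : seq (nat * nat * nat)) :
  {in L, forall t, atom_profile N t} ->
  \sum_(t <- L) t.1.1 = N -> \sum_(t <- L) t.1.2 = N -> \sum_(t <- L) t.2 = 2 ->
  size L \in [:: 2; N; N.+1].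
Proof.
move=> prof sA sB sS.
pose P := [seq t <- L | t.2 == 0]; pose Q := [seq t <- L | t.2 != 0].
have split_sum (f : nat * nat * nat -> nat) :
    \sum_(t <- L) f t = \sum_(t <- P) f t + \sum_(t <- Q) f t.
  by rewrite (bigID (fun t => t.2 == 0)) /= !big_filter.
have pairP t : t \in P -> t = (1, 1, 0).
  rewrite mem_filter => /andP [/eqP s0 /prof].
  by case: t s0 => [[a b] s] /= -> [[-> [-> _]]|[]].
have sumP (f : nat * nat * nat -> nat) : \sum_(t <- P) f t = f (1, 1, 0) * size P.
  rewrite (eq_big_seq (fun=> f (1, 1, 0))) => [|t /pairP -> //].
  by rewrite big_const_seq count_predT iter_addn_0.
have profQ t : t \in Q -> atom_profile N t /\ 0 < t.2.
  by rewrite mem_filter => /andP [s0 /prof]; split; last by rewrite lt0n.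
have sizeL : size L = size P + size Q by rewrite !size_filter count_predC.
rewrite sizeL; rewrite !split_sum !sumP in sA sB sS.
clearbody P Q; clear split_sum sumP pairP sizeL.
have in2 (t1 t2 : nat * nat * nat) s : t2 \in [:: t1, t2 & s].
  by rewrite !inE eqxx orbT.
have in3 (t1 t2 t3 : nat * nat * nat) s : t3 \in [:: t1, t2, t3 & s].
  by rewrite !inE eqxx !orbT.
rewrite !inE /atom_profile /one_two_profile in profQ *.
case: Q profQ sA sB sS => [|[[a1 b1] s1] [|[[a2 b2] s2] [|[[a3 b3] s3] Q]]] profQ;
  rewrite ?big_cons ?big_nil /=.
- lia.
- by move: (profQ _ (mem_head _ _)) => /=; lia.
- by move: (profQ _ (mem_head _ _)) (profQ _ (in2 _ _ [::])) => /=; lia.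
- move: (profQ _ (mem_head _ _)) (profQ _ (in2 _ _ _)).
  by move: (profQ _ (in3 _ _ _ Q)) => /=; lia.
Qed.

End Profiles.

Section CyclicGroup.
Variable m : nat.
Local Notation n := m.+4.
Local Notation Z := 'Z_(m.+4).
Implicit Types (A S : seq Z) (c v x : Z).

Lemma natrZ_eq0 k : (k%:R : Z) = 0 <-> (n %| k)%N.
Proof.
split=> [k0|/eqP nk]; last by rewrite -Zp_nat_mod // nk.
by have := val_Zp_nat (isT : (1 < n)%N) k; rewrite k0 => /esym/eqP.
Qed.

Lemma natrZ_inj k l : (k < n)%N -> (l < n)%N -> (k%:R : Z) = l%:R -> k = l.
Proof.
move=> kn ln kl; have := val_Zp_nat (isT : (1 < n)%N) k.
by rewrite kl val_Zp_nat // !modn_small.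
Qed.

Lemma opprZ_nat k : (k <= n)%N -> - (k%:R : Z) = (n - k)%:R.
Proof.
move=> kn; apply/eqP; rewrite eq_sym -subr_eq0 opprK -natrD subnK //.
exact/eqP/natrZ_eq0.
Qed.

Lemma natrZ_neq k l : (k < n)%N -> (l < n)%N -> k <> l -> (k%:R : Z) != l%:R.
Proof. by move=> kn ln kl; apply/eqP => /natrZ_inj; auto. Qed.

(* The values 1, -1, 2, -2 occurring in B are pairwise distinct: as naturals
   mod n they are 1, n-1, 2, n-2, distinct since n >= 4. *)
Lemma unitsZ_distinct :
  [/\ (1 : Z) != -1, (1 : Z) != 2%:R, (1 : Z) != - 2%:R,
      (-1 : Z) != 2%:R & (-1 : Z) != - 2%:R].
Proof.
rewrite (@opprZ_nat 1) // opprZ_nat // -[1 : Z]/(1%:R).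
by split; apply: natrZ_neq; lia.
Qed.

Lemma unitsZ_nonzero : (1 : Z) != 0 /\ (2%:R : Z) != 0.
Proof. by rewrite -[1 : Z]/(1%:R) -[0 : Z]/(0%:R); split; apply: natrZ_neq. Qed.

Lemma unit_run_not_zero_sum c k :
  c = 1 \/ c = -1 -> (0 < k < n)%N -> ~ zero_sum (nseq k c).
Proof.
move=> c_unit /andP [k0 kn]; rewrite /zero_sum sum_nseq => ck0.
have /natrZ_eq0 /(dvdn_leq k0) : (k%:R : Z) = 0.
  by case: c_unit ck0 => -> // /eqP; rewrite mulNrn oppr_eq0 => /eqP.
lia.
Qed.

Definition U : seq Z := 2%:R :: nseq m.+2 1.
Definition B : seq Z := U ++ map -%R U.

Lemma count_B (P : pred Z) :
  count P B = (P (2%:R)%R + m.+2 * P 1%R + P (- 2%:R)%R + m.+2 * P (-1)%R)%N.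
Proof.
rewrite count_cat /= map_nseq /= !count_nseq.
by move: (P 2%:R) (P 1) (P (- 2%:R)) (P (-1)) => a b c d; lia.
Qed.

Lemma zero_sum_U : zero_sum U.
Proof.
rewrite /zero_sum big_cons sum_nseq -natrD; apply/natrZ_eq0.
by rewrite add2n.
Qed.

(* U is an atom: one of two complementary zero-sum factors avoids the unique 2,
   so it would be a nonempty run of fewer than n ones. *)
Lemma atom_U : atom U.
Proof.
split=> //; split; first exact: zero_sum_U.
move=> [S1 [S2 [n1 [n2 [z1 [z2 US]]]]]].
have two_in S S' : perm_eq U (S ++ S') -> S' <> [::] -> S <> [::] ->
    zero_sum S -> 2%:R \in S.
  move=> US' S'_ne S_ne zS; apply/negPn/negP => no2.
  have S1s x : x \in S -> x = 1.
    move=> xS; have : x \in U by rewrite (perm_mem US') mem_cat xS.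
    rewrite inE mem_nseq => /orP [/eqP x2|/andP [_ /eqP //]].
    by move: no2; rewrite -x2 xS.
  apply: (@unit_run_not_zero_sum 1 (size S)); first by left.
    have := perm_size US'; rewrite size_cat /= size_nseq.
    move/eqP: S_ne; move/eqP: S'_ne; rewrite -!size_eq0 -!lt0n.
    set k := size S; set k' := size S'; lia.
  by rewrite -(constant_seq S1s).
have US21 : perm_eq U (S2 ++ S1) by rewrite perm_sym perm_catC perm_sym.
have := two_in _ _ US n2 n1 z1; have := two_in _ _ US21 n1 n2 z2.
rewrite -!has_pred1 !has_count.
have := permP US (pred1 2%:R); rewrite count_cat /= count_nseq /=.
lia.
Qed.

Lemma atom_opp_U : atom (map -%R U).
Proof. exact: atom_opp atom_U. Qed.

Lemma zero_sum_B : zero_sum B.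
Proof.
by apply: zero_sum_cat; [exact: zero_sum_U | case: atom_opp_U => _ []].
Qed.

Definition factorization_2 : seq (seq Z) := [:: U; map -%R U].
Definition factorization_n_minus_2 : seq (seq Z) :=
  [:: triple_atom 1, triple_atom (-1) & nseq m (pair_atom 1)].
Definition factorization_n_minus_1 : seq (seq Z) :=
  pair_atom 2%:R :: nseq m.+2 (pair_atom 1).

Lemma lengths_B_contain k : k \in [:: 2; m.+2; m.+3]%N -> in_lengths B k.
Proof.
have [nz1 nz2] := unitsZ_nonzero.
have count_pairs (P : pred Z) j c :
    count P (flatten (nseq j (pair_atom c))) = (j * (P c + P (- c)))%N.
  by rewrite count_flatten map_nseq sumn_nseq /= addn0 mulnC.
rewrite !inE => /or3P [] /eqP ->.
- exists factorization_2; split=> //; split; last by rewrite /= cats0.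
  move=> A; rewrite !inE => /orP [] /eqP ->; [exact: atom_U | exact: atom_opp_U].
- exists factorization_n_minus_2; split; first by rewrite /= size_nseq.
  split.
    move=> A; rewrite !inE => /or3P [/eqP ->|/eqP ->|].
    + exact: atom_triple.
    + by apply: atom_triple; rewrite ?oppr_eq0 // mulNrn oppr_eq0.
    + by rewrite mem_nseq => /andP [_ /eqP ->]; apply: atom_pair.
  apply/permP => P; rewrite count_B /= count_pairs opprK mulNrn.
  by move: (P 2%:R) (P 1) (P (- 2%:R)) (P (-1)) => a b c d; lia.
- exists factorization_n_minus_1; split; first by rewrite /= size_nseq.
  split.
    move=> A; rewrite inE => /orP [/eqP ->|]; first exact: atom_pair.
    by rewrite mem_nseq => /andP [_ /eqP ->]; apply: atom_pair.
  apply/permP => P; rewrite count_B /= count_pairs.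
  by move: (P 2%:R) (P 1) (P (- 2%:R)) (P (-1)) => a b c d; lia.
Qed.

Definition non_unit x : bool := (x != 1) && (x != -1).

Lemma mem_B_non_unit x : x \in B -> non_unit x -> x = 2%:R \/ x = - 2%:R.
Proof.
move=> xB /andP [x1 xN1]; move: xB.
rewrite mem_cat /= map_nseq !inE !mem_nseq /= (negbTE x1) (negbTE xN1).
rewrite !andbF !orbF.
by case/orP => /eqP ->; [left | right].
Qed.

Lemma opp_mem_B x : x \in B -> - x \in B.
Proof.
have mem_oppU y : (y \in map -%R U) = (- y \in U).
  by rewrite -{1}[y]opprK (mem_map oppr_inj).
by rewrite !mem_cat !mem_oppU opprK orbC.
Qed.

Lemma atom_containing_units A :
  atom A -> 1 \in A -> -1 \in A -> perm_eq A (pair_atom 1).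
Proof.
move=> aA A1 AN1.
have [d1N1 _ _ _ _] := unitsZ_distinct.
have AN1' : -1 \in rem 1 A.
  by move: AN1; rewrite (perm_mem (perm_to_rem A1)) inE eq_sym (negbTE d1N1).
have A_split : perm_eq A (pair_atom 1 ++ rem (-1) (rem 1 A)).
  by apply: (perm_trans (perm_to_rem A1)); rewrite /= perm_cons perm_to_rem.
have z_pair : zero_sum (pair_atom (1 : Z)).
  by rewrite /zero_sum !big_cons big_nil addr0 subrr.
case: (atom_split aA A_split z_pair) => // rest0.
by rewrite rest0 cats0 in A_split.
Qed.

Lemma atom_without_minus_one A :
  atom A -> {subset A <= B} -> (count_mem 1%R A <= m.+2)%N -> -1 \notin A ->
  (0 < count non_unit A)%N /\
  (count non_unit A = 1%N -> count_mem 1%R A = m.+2 \/ count_mem 1%R A = 2%N).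
Proof.
move=> aA AB ones_le noN1; have [A_ne [zA _]] := aA.
have ones_only S : {subset S <= A} -> count non_unit S = 0%N ->
    S = nseq (count_mem 1 S) 1.
  move=> SA nu0; have /hasPn S_units : ~~ has non_unit S by rewrite has_count nu0.
  have S1 : {in S, forall x, x = 1}.
    move=> x xS; move: (S_units x xS); rewrite negb_and !negbK.
    case/orP=> /eqP // xN1; by move: noN1; rewrite -xN1 SA.
  rewrite {1}(constant_seq S1); congr nseq; apply/esym/eqP.
  by rewrite -all_count; apply/allP => x /S1 ->; rewrite /= eqxx.
have ones_lt : (count_mem 1%R A < n)%N by apply: leq_ltn_trans ones_le _.
have [nu0 | nu_pos] := posnP (count non_unit A).
  have A_ones := ones_only A (fun x xA => xA) nu0.
  exfalso; apply: (@unit_run_not_zero_sum 1 (count_mem 1 A)); first by left.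
    rewrite ones_lt andbT lt0n; apply: contra_notN A_ne => /eqP c0.
    by rewrite A_ones c0.
  by rewrite -A_ones.
split=> // nu1.
have /hasP [v vA v_nu] : has non_unit A by rewrite has_count.
have A_v := perm_to_rem vA.
have rest_ones : rem v A = nseq (count_mem 1 A) 1.
  have ones_rem : count_mem 1 A = count_mem 1 (rem v A).
    by move: v_nu => /andP [v1 _]; rewrite (permP A_v) /= (negbTE v1).
  have nu_rem : count non_unit (rem v A) = 0%N.
    by move: nu1; rewrite (permP A_v) /= v_nu => -[].
  rewrite ones_rem; apply: ones_only nu_rem => x xr.
  by rewrite (perm_mem A_v) inE xr orbT.
have sum_v : v + (count_mem 1 A)%:R = 0.
  by move: zA; rewrite /zero_sum (perm_big _ A_v) big_cons rest_ones sum_nseq.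
case: (mem_B_non_unit (AB v vA) v_nu) => v2; rewrite v2 in sum_v; [left | right].
  move: sum_v; rewrite -natrD => /natrZ_eq0 /(dvdn_leq (isT : (0 < 2 + _)%N)).
  by lia.
by apply: natrZ_inj ones_lt _ _ => //; apply/eqP; rewrite -subr_eq0 addrC sum_v.
Qed.

Lemma counts_opp A :
  [/\ count_mem 1 (map -%R A) = count_mem (-1) A,
      count_mem (-1) (map -%R A) = count_mem 1 A &
      count non_unit (map -%R A) = count non_unit A].
Proof.
rewrite !count_map; split; apply: eq_count => x /=.
- by rewrite eqr_oppLR.
- by rewrite eqr_opp.
- by rewrite /non_unit eqr_oppLR eqr_opp andbC.
Qed.

Lemma counts_B :
  [/\ count_mem 1 B = m.+2, count_mem (-1) B = m.+2 & count non_unit B = 2%N].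
Proof.
have [d1N1 d12 d1N2 dN12 dN1N2] := unitsZ_distinct.
have eqF x y : x != y -> ((x == y) = false) * ((y == x) = false).
  by move/negbTE=> xy; rewrite [y == x]eq_sym xy.
rewrite !count_B /= /non_unit !eqxx.
rewrite !(eqF _ _ d1N1, eqF _ _ d12, eqF _ _ d1N2, eqF _ _ dN12, eqF _ _ dN1N2).
by split; lia.
Qed.

Definition profile A : nat * nat * nat :=
  (count_mem 1 A, count_mem (-1) A, count non_unit A).

Lemma profile_of_atom A :
  atom A -> {subset A <= B} ->
  (count_mem 1%R A <= m.+2)%N -> (count_mem (-1)%R A <= m.+2)%N ->
  atom_profile m.+2 (profile A).
Proof.
move=> aA AB le1 leN1; rewrite /profile /atom_profile /one_two_profile.
have [AN1 | noN1] := boolP (-1 \in A); last first.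
  have [nu_pos nu1] := atom_without_minus_one aA AB le1 noN1.
  rewrite (count_memPn noN1); right; split=> //; split; first by right.
  by move=> /nu1 [] ->; [left | right; left].
have [A1 | no1] := boolP (1 \in A).
  left; have [d1N1 _ _ _ _] := unitsZ_distinct.
  rewrite !(permP (atom_containing_units aA A1 AN1)) /= eqxx eq_sym (negbTE d1N1).
  by rewrite /non_unit !eqxx andbF.
have [ones_opp mones_opp nu_opp] := counts_opp A.
have := @atom_without_minus_one (map -%R A) (atom_opp aA).
rewrite ones_opp nu_opp (mem_map oppr_inj) => /(_ _ leN1 no1) [|nu_pos nu1].
  by move=> _ /mapP [y yA ->]; apply/opp_mem_B/AB.
rewrite (count_memPn no1); right; split=> //; split; first by left.
by move=> /nu1 [] ->; right; right; [left | right].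
Qed.

Lemma lengths_B_within k : in_lengths B k -> k \in [:: 2; m.+2; m.+3]%N.
Proof.
move=> [F [<- [atomsF BF]]].
have total (P : pred Z) : \sum_(A <- F) count P A = count P B.
  by rewrite (permP BF) count_flatten sumnE big_map.
have factor A : A \in F -> exists R, perm_eq B (A ++ R).
  move=> AF; exists (flatten (rem A F)).
  exact: perm_trans BF (perm_flatten (perm_to_rem AF)).
have [ones_B mones_B nu_B] := counts_B.
rewrite -(size_map profile).
apply: size_of_profiles; rewrite ?big_map /= ?total //.
move=> _ /mapP [A AF ->]; have [R BAR] := factor A AF.
apply: profile_of_atom (atomsF A AF) _ _ _.
- by move=> x xA; rewrite (perm_mem BAR) mem_cat xA.
- by rewrite (leq_trans _ (eq_leq ones_B)) // (permP BAR) count_cat leq_addr.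
- by rewrite (leq_trans _ (eq_leq mones_B)) // (permP BAR) count_cat leq_addr.
Qed.

End CyclicGroup.

Theorem lemma4p2 (n : nat) (hn : (4 <= n)%N) :
  in_system_of_sets [the zmodType of 'Z_n]
    (fun k => k \in [:: 2; n - 2; n - 1]%N).
Proof.
case: n hn => [|[|[|[|m]]]] // _.
exists (B m); split; first exact: zero_sum_B.
have -> : (m.+4 - 2 = m.+2)%N by rewrite subn2.
have -> : (m.+4 - 1 = m.+3)%N by rewrite subn1.
by move=> k; split; [exact: lengths_B_within | exact: lengths_B_contain].
Qed.
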